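(* In the setting of the context, fix $k$ and assume that the MHDM iterate $x_k$ minimizes $x\mapsto\frac{\lambda_k}{2}\|Tx-f\|^2+J(x)$. Let $u_{k+1}=x_{k+1}-x_k$ and $\xi_{k+1}=\lambda_{k+1}T^*(f-Tx_{k+1})\in\partial J(u_{k+1})$. Then $x_{k+1}$ minimizes $x\mapsto\frac{\lambda_{k+1}}{2}\|Tx-f\|^2+J(x)$ if and only if $$J(u_{k+1})-J(x_{k+1})-\langle\xi_{k+1},u_{k+1}-x_{k+1}\rangle=0 .$$
   Context: $X$ Banach, $H$ Hilbert, $T\in\mathcal L(X,H)$, $f\in H$, $J:X\to[0,\infty]$ a seminorm ($J(\alpha x)=|\alpha|J(x)$, $J(x+y)\le J(x)+J(y)$) such that the relevant Tikhonov-type functionals have minimizers, $(\lambda_k)$ an increasing sequence of positive parameters. MHDM: $x_0\in\arg\min_x\frac{\lambda_0}{2}\|Tx-f\|^2+J(x)$, and for $k\ge1$, $x_k\in\arg\min_x\frac{\lambda_k}{2}\|Tx-f\|^2+J(x-x_{k-1})$. Subgradient $\partial J(x_0)=\{x^*\in X^*:\langle x^*,x-x_0\rangle\le J(x)-J(x_0)\ \forall x\}$. *)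

From HB Require Import structures.
From mathcomp Require Import all_boot all_order all_algebra.
From mathcomp Require Import all_classical all_reals all_analysis.
Set Implicit Arguments. Unset Strict Implicit. Unset Printing Implicit Defensive.
Import Order.TTheory GRing.Theory Num.Theory.
Import numFieldNormedType.Exports.
Local Open Scope ring_scope.

(* ip is a real inner product on H inducing the norm of H
   (so a completeNormedModType H with such an ip is a real Hilbert space). *)
Definition is_inner_product {R : realType} {H : normedModType R}
  (ip : H -> H -> R) : Prop :=
  [/\ (forall x y, ip x y = ip y x),
      (forall a x y z, ip (a *: x + y) z = a * ip x z + ip y z),
      (forall x, 0 <= ip x x),
      (forall x, ip x x = 0 -> x = 0)
    & (forall x, `|x| ^+ 2 = ip x x)].

Definition ext_seminorm {R : realType} {X : normedModType R}
  (J : X -> \bar R) : Prop :=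
  [/\ (forall x : X, (0 <= J x)%E),
      (forall (a : R) x, J (a *: x) = (`|a|%:E * J x)%E)
    & (forall x y : X, (J (x + y)%R <= J x + J y)%E)].

Definition is_minimizer {T : Type} {R : realType} (F : T -> \bar R) (x0 : T) : Prop :=
  forall x, (F x0 <= F x)%E.

Definition tikhonov {R : realType} {X H : normedModType R}
  (T : X -> H) (f : H) (J : X -> \bar R) (lam : R) (x : X) : \bar R :=
  ((lam / 2 * `|T x - f| ^+ 2)%:E + J x)%E.

Definition is_MHDM {R : realType} {X H : normedModType R}
  (T : X -> H) (f : H) (J : X -> \bar R) (lam : nat -> R) (x : nat -> X) : Prop :=
  is_minimizer (tikhonov T f J (lam 0%N)) (x 0%N) /\
  forall k : nat, is_minimizer
    (fun y => ((lam k.+1 / 2 * `|T y - f| ^+ 2)%:E + J (y - x k)%R)%E) (x k.+1).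

From HB Require Import structures.
From mathcomp Require Import all_boot all_order all_algebra.
From mathcomp Require Import all_classical all_reals all_analysis.
From mathcomp Require Import ring lra.
Import Order.TTheory GRing.Theory Num.Theory.
Import numFieldNormedType.Exports.
Local Open Scope ring_scope.
Set Implicit Arguments.

(* For a center c, consider the shifted Tikhonov functional
     Phi_c(x) = lam/2 ||T x - f||^2 + J(x - c),
   and the dual residual xi_y(z) = lam <f - T y, T z> (that is,
   lam T^*(f - T y)).  Since J is a seminorm, xi_y is a subgradient of J at
   w iff xi_y <= J everywhere and J w = xi_y w.  The central fact is the
   optimality condition
     y minimizes Phi_c  <->  xi_y is a subgradient of J at y - c.
   Necessity comes from comparing Phi_c(y) with Phi_c along the rays
   y + t z and y - t (y - c), t in (0, 1), which yields quadratic
   inequalities in t whose linear coefficient must be nonnegative;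
   sufficiency is the convexity inequality for the squared residual.
   The theorem follows: the MHDM step says xi := xi_{x_{k+1}} is a
   subgradient of J at u, so J u = xi u and xi <= J; the Tikhonov functional
   is Phi_0, so x_{k+1} minimizes it iff J x_{k+1} = xi x_{k+1}, which by
   linearity of xi is the stated Bregman-type identity. *)

Lemma quadratic_slope_ge0 (R : realFieldType) (alpha beta : R) :
  0 <= beta -> (forall t, 0 < t -> t < 1 -> 0 <= t * alpha + t ^+ 2 * beta) ->
  0 <= alpha.
Proof.
move=> beta_ge0 quad_ge0; rewrite leNgt; apply/negP => alpha_lt0.
pose t := - alpha / (2 * (beta - alpha)).
have t_gt0 : 0 < t by rewrite divr_gt0 //; lra.
have t_def : t * (beta - alpha) * 2 = - alpha by rewrite /t; field; lra.
have t_lt1 : t < 1 by rewrite ltr_pdivrMr ?mul1r; lra.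
have t_beta : t * beta = - alpha / 2 + t * alpha by rewrite -t_def; field.
have := quad_ge0 t t_gt0 t_lt1.
rewrite expr2 -mulrA t_beta -mulrDr pmulr_rge0 //; nra.
Qed.

Section InnerProduct.
Variables (R : realType) (H : normedModType R) (ip : H -> H -> R).
Hypothesis ip_inner : is_inner_product ip.

Lemma ipZDr a x y z : ip z (a *: x + y) = a * ip z x + ip z y.
Proof. by case: ip_inner => ipC ipZD _ _ _; rewrite ipC ipZD (ipC x) (ipC y). Qed.

Lemma ipDl x y z : ip (x + y) z = ip x z + ip y z.
Proof. by case: ip_inner => _ ipZD _ _ _; rewrite -[x]scale1r ipZD mul1r scale1r. Qed.

Lemma ipDr x y z : ip z (x + y) = ip z x + ip z y.
Proof. by rewrite -[x]scale1r ipZDr mul1r scale1r. Qed.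

Lemma ipZr a x z : ip z (a *: x) = a * ip z x.
Proof.
have ip0r : ip z 0 = 0 by have := ipDr 0 0 z; rewrite addr0; lra.
by rewrite -[a *: x]addr0 ipZDr ip0r addr0.
Qed.

Lemma ipBr x y z : ip z (x - y) = ip z x - ip z y.
Proof. by rewrite ipDr -scaleN1r ipZr mulN1r. Qed.

Lemma ipNl x z : ip (- x) z = - ip x z.
Proof. by case: ip_inner => ipC _ _ _ _; rewrite ipC -scaleN1r ipZr ipC mulN1r. Qed.

Lemma sqr_normD v w : `|v + w| ^+ 2 = `|v| ^+ 2 + 2 * ip v w + `|w| ^+ 2.
Proof.
case: ip_inner => ipC _ _ _ normE.
by rewrite !normE ipDl !ipDr (ipC w v); ring.
Qed.

End InnerProduct.

Section Optimality.
Variables (R : realType) (X H : normedModType R) (ip : H -> H -> R)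
  (T : {linear X -> H}) (f : H) (J : X -> \bar R) (lam : R).
Hypothesis ip_inner : is_inner_product ip.
Hypothesis J_seminorm : ext_seminorm J.
Hypothesis lam_gt0 : 0 < lam.

Definition shifted_tikhonov (c x : X) : \bar R :=
  ((lam / 2 * `|T x - f| ^+ 2)%:E + J (x - c)%R)%E.

(* The dual residual lam T^*(f - T y), as a linear functional on X. *)
Definition dual_residual (y z : X) : R := lam * ip (f - T y) (T z).

(* For a seminorm J and a linear xi, this is the statement xi \in dJ(w). *)
Definition seminorm_subgradient (xi : X -> R) (w : X) : Prop :=
  (forall z, ((xi z)%:E <= J z)%E) /\ J w = (xi w)%:E.

Lemma tikhonov_center0 : tikhonov T f J lam = shifted_tikhonov 0.
Proof. by apply/funext => x; rewrite /shifted_tikhonov subr0. Qed.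

Lemma dual_residualB y a b :
  dual_residual y (a - b) = dual_residual y a - dual_residual y b.
Proof. by rewrite /dual_residual linearB (ipBr ip_inner); ring. Qed.

Lemma J0 : J 0 = 0%E.
Proof.
by case: J_seminorm => _ JZ _; rewrite -(scale0r (0 : X)) JZ normr0 mul0e.
Qed.

Lemma data_term_ray y d t :
  lam / 2 * `|T (y + t *: d) - f| ^+ 2 = lam / 2 * `|T y - f| ^+ 2
    - t * dual_residual y d + t ^+ 2 * (lam / 2 * `|T d| ^+ 2).
Proof.
have -> : T (y + t *: d) - f = (T y - f) + t *: T d
  by rewrite linearD linearZ addrAC.
rewrite (sqr_normD ip_inner) normrZ exprMn real_normK ?num_real //.
by rewrite (ipZr ip_inner) /dual_residual -opprB (ipNl ip_inner); field.
Qed.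

Section Minimizer.
Variables (c y : X).
Hypothesis y_min : is_minimizer (shifted_tikhonov c) y.

(* A minimizer has a finite regularization term (compare with x = c). *)
Lemma minimizer_J_finite : exists a : R, J (y - c) = a%:E.
Proof.
have := y_min c; rewrite /shifted_tikhonov subrr J0 adde0.
case: J_seminorm => J_ge0 _ _.
by case: (J (y - c)) (J_ge0 (y - c)) => [a| |] //; exists a.
Qed.

Lemma minimizer_variation {a d t s} :
  J (y - c) = a%:E -> (J (y + t *: d - c)%R <= (a + s)%:E)%E ->
  0 <= s - t * dual_residual y d + t ^+ 2 * (lam / 2 * `|T d| ^+ 2).
Proof.
move=> Ja J_le.
have := le_trans (y_min (y + t *: d)) (leeD2l _ J_le).
rewrite /shifted_tikhonov Ja -!EFinD lee_fin data_term_ray; lra.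
Qed.

(* Necessity: the ray y + t z gives xi_y <= J, and the ray y - t (y - c),
   along which J shrinks by the factor 1 - t, gives J (y - c) <= xi_y (y - c). *)
Lemma minimizer_subgradient : seminorm_subgradient (dual_residual y) (y - c).
Proof.
case: J_seminorm => J_ge0 JZ JD.
have [a Ja] := minimizer_J_finite.
have beta_ge0 d : 0 <= lam / 2 * `|T d| ^+ 2.
  by rewrite mulr_ge0 ?sqr_ge0 // divr_ge0 // ltW.
have xi_le_J z : ((dual_residual y z)%:E <= J z)%E.
  case Jz: (J z) (J_ge0 z) => [r| |] // _; last by rewrite leey.
  rewrite lee_fin -subr_ge0; apply: quadratic_slope_ge0 (beta_ge0 z) _.
  move=> t t_gt0 _.
  have J_ray : (J (y + t *: z - c)%R <= (a + t * r)%:E)%E.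
    rewrite addrAC; apply: le_trans (JD _ _) _.
    by rewrite Ja JZ Jz -EFinM -EFinD ger0_norm // ltW.
  have := minimizer_variation Ja J_ray; lra.
have J_le_xi : a <= dual_residual y (y - c).
  rewrite -subr_ge0; apply: quadratic_slope_ge0 (beta_ge0 (y - c)) _.
  move=> t _ t_lt1.
  have J_ray : (J (y + (- t) *: (y - c) - c)%R <= (a + - t * a)%:E)%E.
    rewrite addrAC -{1}[y - c]scale1r -scalerDl JZ Ja -EFinM ger0_norm; last lra.
    by rewrite lee_fin; lra.
  by have := minimizer_variation Ja J_ray; rewrite sqrrN; lra.
have xi_le_Jw : dual_residual y (y - c) <= a by rewrite -lee_fin -Ja xi_le_J.
by split=> //; rewrite Ja; congr EFin; apply: le_anti; rewrite J_le_xi xi_le_Jw.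
Qed.

End Minimizer.

Lemma subgradient_minimizer c y :
  seminorm_subgradient (dual_residual y) (y - c) ->
  is_minimizer (shifted_tikhonov c) y.
Proof.
move=> [xi_le_J J_eq] z; rewrite /shifted_tikhonov.
apply: le_trans (leeD2l _ (xi_le_J (z - c))).
have data := data_term_ray y (z - y) 1.
rewrite scale1r subrKC expr1n !mul1r in data.
have xi_split : dual_residual y (z - c) - dual_residual y (y - c)
    = dual_residual y (z - y).
  by rewrite -dual_residualB opprB addrA subrK.
have : 0 <= lam / 2 * `|T (z - y)| ^+ 2.
  by rewrite mulr_ge0 ?sqr_ge0 // divr_ge0 // ltW.
rewrite J_eq -!EFinD lee_fin; lra.
Qed.

Lemma minimizerP c y :
  is_minimizer (shifted_tikhonov c) y <->
  seminorm_subgradient (dual_residual y) (y - c).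
Proof. by split; [exact: minimizer_subgradient | exact: subgradient_minimizer]. Qed.

End Optimality.

Theorem mainTheorem11 (R : realType) (X H : completeNormedModType R)
  (ip : H -> H -> R) (T : {linear X -> H}) (f : H) (J : X -> \bar R)
  (lam : nat -> R) (x : nat -> X) (k : nat) :
  is_inner_product ip ->
  continuous T ->
  ext_seminorm J ->
  (forall n, 0 < lam n) ->
  (forall n, lam n < lam n.+1) ->
  is_MHDM T f J lam x ->
  is_minimizer (tikhonov T f J (lam k)) (x k) ->
  let u := x k.+1 - x k in
  (* xi = lam_{k+1} T^*(f - T x_{k+1}), as a functional on X:
     <xi, z> = lam_{k+1} <f - T x_{k+1}, T z>_H *)
  let xi := fun z : X => lam k.+1 * ip (f - T (x k.+1)) (T z) in
  is_minimizer (tikhonov T f J (lam k.+1)) (x k.+1) <->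
  (J u - J (x k.+1) - (xi (u - x k.+1))%:E = 0)%E.
Proof.
move=> ip_inner _ J_seminorm lam_gt0 _ [_ mhdm_step] _ u xi.
have optimality := minimizerP T f _ ip_inner J_seminorm (lam_gt0 k.+1).
have [xi_le_J J_u] : seminorm_subgradient _ J xi u := (optimality _ _).1 (mhdm_step k).
have xiB a b : xi (a - b) = xi a - xi b := dual_residualB T f _ ip_inner _ a b.
rewrite tikhonov_center0 optimality subr0.
have -> : dual_residual ip T f (lam k.+1) (x k.+1) = xi by [].
rewrite /seminorm_subgradient J_u (xiB u).
case: (J (x k.+1)) => [r| |]; last 2 first.
- by split=> [[_ //]|].
- by split=> [[_ //]|].
rewrite -!EFinB; split=> [[_ [->]]|[r_eq]]; first by rewrite subrr.
by split=> //; congr EFin; lra.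
Qed.
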